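(* Let $G$ be a finite graph whose edges are totally ordered and labelled $e_1<e_2<\dots<e_m$. Suppose that for some $i$ and some $k>0$ the edges $e_i,e_{i+1},\dots,e_{i+k}$ are all positive and form a path $P_{k+1}$ in $G$, traversed in this order (so consecutive edges $e_{i+r},e_{i+r+1}$ share an interior vertex of the path), and that every interior vertex of this path has degree exactly two in $G$. Let $S$ be any spanning tree of $G$. Then the subword of the activity word $a(S)$ formed by the letters at positions $i,\dots,i+k$ (i.e. $a(e_i,S)a(e_{i+1},S)\cdots a(e_{i+k},S)$) is one of the following: (1) when $S$ contains all edges of $P_{k+1}$: $L L\cdots L$ or $D D\cdots D$ (all $k+1$ letters equal); (2) when $S$ omits exactly the edge $e_{i+j}$ of $P_{k+1}$ for some $0<j\le k$: $L^{j}\,d\,D^{k-j}$, i.e. $e_i,\dots,e_{i+j-1}$ are labelled $L$, $e_{i+j}$ is labelled $d$, and $e_{i+j+1},\dots,e_{i+k}$ are labelled $D$; (3) when $S$ omits exactly the first edge $e_i$: $\ell\, D^{k}$ or $d\,D^{k}$.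
   Context: Tutte's activity: let $G$ be a graph with signed edges (each edge positive or negative) whose $m$ edges are totally ordered. For a spanning tree $S$ of $G$ and an edge $e$: if $e\in S$ and $e$ is positive, $e$ is internally active, letter $L$, if $e$ is the lowest-ordered edge of $G$ that reconnects the two components of $S-\{e\}$, and internally inactive, letter $D$, otherwise. If $e\notin S$ and $e$ is positive, $e$ is externally active, letter $\ell$, if $e$ is the lowest-ordered edge of the unique cycle contained in $S\cup\{e\}$, and externally inactive, letter $d$, otherwise. For negative edges the same rules give the barred letters $\overline{L},\overline{D},\overline{\ell},\overline{d}$. The letter of $e$ is denoted $a(e,S)$, and the activity word $a(S)$ is the word of length $m$ whose $r$-th letter is $a(e_r,S)$. *)

From mathcomp Require Import all_boot.
Set Implicit Arguments. Unset Strict Implicit. Unset Printing Implicit Defensive.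

(* A finite (multi)graph with signed, totally ordered edges:
   vertices form a finType V, the m edges are e_0 < e_1 < ... < e_(m-1),
   i.e. the ordinals 'I_m ordered by their value; [ends e] gives the two
   endpoints of edge e and [pos e] is true iff e is positive. *)

Section Tutte.
Variables (V : finType) (m : nat) (ends : 'I_m -> V * V) (pos : 'I_m -> bool).

Definition joins (f : 'I_m) (x y : V) : bool :=
  (((ends f).1 == x) && ((ends f).2 == y)) || (((ends f).1 == y) && ((ends f).2 == x)).

Definition adjF (F : {set 'I_m}) : rel V := fun x y => [exists f in F, joins f x y].

Definition conn (F : {set 'I_m}) (x y : V) : bool := connect (adjF F) x y.

Definition connectedF (F : {set 'I_m}) : Prop := forall x y : V, conn F x y.

(* (V, F) is acyclic: no edge of F lies on a cycle of F, i.e. removing any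
   edge f of F disconnects its endpoints (this also excludes loops). *)
Definition acyclicF (F : {set 'I_m}) : Prop :=
  forall f, f \in F -> ~~ conn (F :\ f) (ends f).1 (ends f).2.

Definition spanning_tree (S : {set 'I_m}) : Prop := connectedF S /\ acyclicF S.

(* degree of a vertex (a loop counts twice) *)
Definition degree (x : V) : nat :=
  \sum_(f : 'I_m) (((ends f).1 == x) + ((ends f).2 == x)).

Definition reconnects (S : {set 'I_m}) (e f : 'I_m) : bool :=
  ~~ conn (S :\ e) (ends f).1 (ends f).2.

Definition int_active (S : {set 'I_m}) (e : 'I_m) : bool :=
  [forall f, reconnects S e f ==> (e <= f)%N].

Definition on_cycle (S : {set 'I_m}) (e f : 'I_m) : bool :=
  (f \in e |: S) && conn ((e |: S) :\ f) (ends f).1 (ends f).2.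

Definition ext_active (S : {set 'I_m}) (e : 'I_m) : bool :=
  [forall f, on_cycle S e f ==> (e <= f)%N].

End Tutte.

Inductive letter := L | D | l | d | Lbar | Dbar | lbar | dbar.

Definition activity (V : finType) (m : nat) (ends : 'I_m -> V * V)
    (pos : 'I_m -> bool) (S : {set 'I_m}) (e : 'I_m) : letter :=
  if e \in S then
    (if int_active ends S e then (if pos e then L else Lbar)
     else (if pos e then D else Dbar))
  else
    (if ext_active ends S e then (if pos e then l else lbar)
     else (if pos e then d else dbar)).

From mathcomp Require Import all_boot zify.
Set Implicit Arguments. Unset Strict Implicit. Unset Printing Implicit Defensive.

(* Since the interior vertices v 1, ..., v k have degree two, the only edges touching a
   run v a, ..., v b of them are path edges, so once the two path edges bounding the run
   are missing from an edge set, the run is a union of its components.  Removing the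
   path edge e_(i+r) from S thus cuts off the run between e_(i+r) and the nearest path
   edge missing from S.  If that gap lies above e_(i+r), every edge reconnecting S - e
   touches the run and is therefore a later path edge (letter L); if it lies below, the
   gap edge itself reconnects S - e (letter D); and the edge just before the gap lies on
   the fundamental cycle of the gap edge (letter d).  When S contains the whole path,
   a walk of S - e entering the path leaves it through the same end, so which edges off
   the path reconnect S - e does not depend on the path edge e: all letters agree. *)

Lemma connect_homo (T T' : finType) (e : rel T) (e' : rel T') (h : T -> T') :
  (forall x y, e x y -> connect e' (h x) (h y)) ->
  forall x y, connect e x y -> connect e' (h x) (h y).
Proof.
move=> eh x _ /connectP[p e_p ->]; elim: p x e_p => [|y p IHp] x /=.
  by move=> _; apply: connect0.
by case/andP=> /eh exy /IHp; apply: connect_trans.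
Qed.

Section Graph.
Variables (V : finType) (m : nat) (ends : 'I_m -> V * V).

Definition touches (f : 'I_m) (x : V) : bool := ((ends f).1 == x) || ((ends f).2 == x).

Lemma joins_sym f x y : joins ends f x y = joins ends f y x.
Proof. by rewrite /joins orbC. Qed.

Lemma joins_ends f : joins ends f (ends f).1 (ends f).2.
Proof. by rewrite /joins !eqxx. Qed.

Lemma joins_cases f x y : joins ends f x y ->
  ((ends f).1 = x /\ (ends f).2 = y) \/ ((ends f).1 = y /\ (ends f).2 = x).
Proof. by case/orP=> /andP[/eqP-> /eqP->]; [left|right]. Qed.

Lemma joins_touches f x y : joins ends f x y -> touches f x.
Proof. by rewrite /touches; case/joins_cases=> [[-> _]|[_ ->]]; rewrite eqxx ?orbT. Qed.

Lemma joins_other f x y z : joins ends f x y -> joins ends f x z -> z = y.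
Proof.
by case/joins_cases=> -[e1 e2] /joins_cases[[f1 f2]|[f1 f2]]; congruence.
Qed.

Lemma adjF_sym (F : {set 'I_m}) : symmetric (adjF ends F).
Proof.
by move=> x y; apply/existsP/existsP=> -[f /andP[fF jf]]; exists f; rewrite fF joins_sym.
Qed.

Lemma conn_sym (F : {set 'I_m}) x y : conn ends F x y = conn ends F y x.
Proof. exact: (sym_connect_sym (adjF_sym F)). Qed.

Lemma conn_edge (F : {set 'I_m}) f x y : f \in F -> joins ends f x y -> conn ends F x y.
Proof. by move=> fF jf; apply: connect1; apply/existsP; exists f; rewrite fF. Qed.

Lemma conn_ends (F : {set 'I_m}) f x y : joins ends f x y ->
  conn ends F (ends f).1 (ends f).2 = conn ends F x y.
Proof. by case/joins_cases=> [[-> ->]|[-> ->]] //; rewrite conn_sym. Qed.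

Lemma conn_mono (F F' : {set 'I_m}) x y :
  F \subset F' -> conn ends F x y -> conn ends F' x y.
Proof.
move=> sFF'; apply: connect_sub => {}x {}y /existsP[f /andP[fF jf]].
exact: conn_edge (subsetP sFF' f fF) jf.
Qed.

Lemma conn_closed (F : {set 'I_m}) (C : {pred V}) :
  (forall f x y, f \in F -> joins ends f x y -> x \in C -> y \in C) ->
  forall x y, conn ends F x y -> x \in C -> y \in C.
Proof.
move=> clC x y /(closed_connect (intro_closed (sym_connect_sym (adjF_sym F)) _)) -> //.
by move=> {}x {}y /existsP[f /andP[fF jf]]; apply: clC jf.
Qed.

Lemma card_touches_le_degree x : #|[pred f | touches f x]| <= degree ends x.
Proof.
rewrite -sum1_card /degree big_mkcond /=; apply: leq_sum => f _.
by rewrite inE /touches; case: (_ == x); case: (_ == x).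
Qed.

Lemma conn_setD1_split (S : {set 'I_m}) e x y z : connectedF ends S -> e \in S ->
  joins ends e x y -> conn ends (S :\ e) x z || conn ends (S :\ e) y z.
Proof.
move=> cS eS jxy.
pose C := [pred u | conn ends (S :\ e) x u || conn ends (S :\ e) y u].
apply: (@conn_closed S C _ x) => //; last by rewrite inE /conn connect0.
move=> f u w fS jf; rewrite !inE.
case: (eqVneq f e) jf => [-> jf|fe jf].
  by case/joins_cases: jxy (joins_cases jf) => -[-> ->] [[<- <-]|[<- <-]] _;
    rewrite /conn connect0 ?orbT.
have fSe : f \in S :\ e by rewrite !inE fe.
by case/orP=> c; apply/orP; [left|right]; apply: connect_trans c (conn_edge fSe jf).
Qed.

Lemma reconnects_not_int_active (S : {set 'I_m}) e f :
  reconnects ends S e f -> f < e -> ~~ int_active ends S e.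
Proof. by move=> rec fe; apply/forallPn; exists f; rewrite negb_imply rec -ltnNge. Qed.

End Graph.

Section Path.
Variables (V : finType) (m : nat) (ends : 'I_m -> V * V) (i k : nat) (v : nat -> V).
Hypotheses (hik : i + k < m)
  (hvinj : forall r s, r <= k.+1 -> s <= k.+1 -> v r = v s -> r = s)
  (hpath : forall e : 'I_m, i <= e <= i + k -> joins ends e (v (e - i)) (v (e - i).+1))
  (hdeg : forall r, 1 <= r <= k -> degree ends (v r) = 2).

Definition path_edge (t : nat) : 'I_m := insubd (Ordinal hik) (i + t).

Definition path_edges : {set 'I_m} := [set g : 'I_m | i <= g <= i + k].

Lemma path_edgeE t : t <= k -> path_edge t = i + t :> nat.
Proof. by move=> tk; apply: insubdK => /=; lia. Qed.

Lemma mem_path_edges t : t <= k -> path_edge t \in path_edges.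
Proof. by move=> tk; rewrite inE path_edgeE //; lia. Qed.

Lemma path_edgesP g : reflect (exists2 t, t <= k & g = path_edge t) (g \in path_edges).
Proof.
rewrite inE; apply: (iffP idP) => [gP|[t tk ->]]; last by rewrite path_edgeE //; lia.
by exists (g - i); last apply: val_inj; rewrite /= ?path_edgeE; lia.
Qed.

Lemma joins_path_edge t : t <= k -> joins ends (path_edge t) (v t) (v t.+1).
Proof.
move=> tk; have := hpath (e := path_edge t); rewrite path_edgeE // addKn; apply; lia.
Qed.

Lemma touches_interior s g : 1 <= s <= k -> touches ends g (v s) ->
  g = path_edge s.-1 \/ g = path_edge s.
Proof.
move=> sk tg; case: (eqVneq g (path_edge s.-1)) => [|g1]; first by left.
case: (eqVneq g (path_edge s)) => [|g2]; first by right.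
have t1 : touches ends (path_edge s.-1) (v s).
  have := joins_path_edge (t := s.-1) ltac:(lia).
  rewrite prednK; last by lia.
  by rewrite joins_sym => /joins_touches.
have t2 : touches ends (path_edge s) (v s) by apply: joins_touches (joins_path_edge _); lia.
have d12 : path_edge s.-1 != path_edge s.
  by apply/eqP => /(congr1 (@nat_of_ord m)); rewrite !path_edgeE; lia.
have := card_touches_le_degree ends (v s); rewrite hdeg // leqNgt => /negP[].
apply/card_gt2P; exists (path_edge s.-1), (path_edge s), g.
by rewrite !inE t1 t2 tg d12 g1 eq_sym g2.
Qed.

Definition segment (a b : nat) : {pred V} :=
  [pred x | has (fun s => x == v s) (index_iota a b.+1)].

Lemma segmentP a b x : reflect (exists2 s, a <= s <= b & x = v s) (x \in segment a b).
Proof.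
apply: (iffP hasP) => [[s]|[s sab ->]]; last by exists s; rewrite ?mem_index_iota ?eqxx //; lia.
by rewrite mem_index_iota => sab /eqP ->; exists s => //; lia.
Qed.

Lemma mem_segment_v a b s : b <= k.+1 -> s <= k.+1 -> (v s \in segment a b) = (a <= s <= b).
Proof.
move=> bk sk; apply/segmentP/idP => [[t tab /hvinj]|sab]; last by exists s.
by move=> ts; rewrite ts //; lia.
Qed.

Lemma touches_off_path g x : g \notin path_edges -> touches ends g x ->
  x \notin segment 1 k.
Proof.
move=> gP tg; apply/segmentP => -[s sk xs]; rewrite xs in tg.
by case: (touches_interior sk tg) => gs; move: gP; rewrite gs mem_path_edges //; lia.
Qed.

Lemma segment_closed a b (F : {set 'I_m}) : 1 <= a -> b <= k ->
  path_edge a.-1 \notin F -> path_edge b \notin F ->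
  forall x y, conn ends F x y -> x \in segment a b -> y \in segment a b.
Proof.
move=> a1 bk aF bF; apply: conn_closed => g x z gF jg /segmentP[s sab xs]; subst x.
have [ge|ge] := touches_interior (s := s) ltac:(lia) (joins_touches jg); subst g.
- case: (eqVneq s a) => [sa|sa]; first by move: gF; rewrite sa (negbTE aF).
  have js := joins_path_edge (t := s.-1) ltac:(lia).
  rewrite prednK in js; last by lia.
  rewrite joins_sym in js.
  by rewrite (joins_other js jg) mem_segment_v; lia.
- case: (eqVneq s b) => [sb|sb]; first by move: gF; rewrite sb (negbTE bF).
  have js := joins_path_edge (t := s) ltac:(lia).
  by rewrite (joins_other js jg) mem_segment_v; lia.
Qed.

(* A walk that leaves the path through one of its ends must come back through the
   same end once some path edge is missing, so collapsing each side of the gap onto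
   the corresponding end of the path maps [F]-walks to walks avoiding the path. *)
Lemma conn_skip_path r (F : {set 'I_m}) x y : r <= k -> path_edge r \notin F ->
  x \notin segment 1 k -> y \notin segment 1 k ->
  conn ends F x y -> conn ends (F :\: path_edges) x y.
Proof.
move=> rk rF xI yI cxy.
pose collapse z := if z \in segment 0 r then v 0
                   else if z \in segment r.+1 k.+1 then v k.+1 else z.
have collapse_id z : z \notin segment 1 k -> collapse z = z.
  move=> zI; rewrite /collapse; case: ifP => [/segmentP[s ss zs]|_].
    have s0 : s = 0 by move: zI; rewrite zs mem_segment_v; lia.
    by rewrite zs s0.
  case: ifP => [/segmentP[s ss zs]|//].
  have sk : s = k.+1 by move: zI; rewrite zs mem_segment_v; lia.
  by rewrite zs sk.
have collapse_step t : t <= k -> t != r -> collapse (v t) = collapse (v t.+1).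
  move=> tk tr; rewrite /collapse !mem_segment_v //; try lia.
  by case: (ltngtP t r) tr => // tr' _; rewrite ?ifT ?ifF //; lia.
rewrite -(collapse_id x xI) -(collapse_id y yI).
apply: (connect_homo (h := collapse) _ cxy) => a b /existsP[g /andP[gF jg]].
case: (boolP (g \in path_edges)) => [/path_edgesP[t tk gt]|gP].
  have tr : t != r by apply: contraNneq rF => <-; rewrite -gt.
  rewrite gt in jg; move/joins_cases: (joins_path_edge tk).
  by case/joins_cases: jg => -[<- <-] [[->->]|[->->]];
    rewrite ?(collapse_step t tk tr); apply: connect0.
have jg' : joins ends g b a by rewrite joins_sym.
rewrite !collapse_id ?(touches_off_path gP (joins_touches jg))
                    ?(touches_off_path gP (joins_touches jg')) //.
by apply: (conn_edge (f := g)); rewrite // inE gP gF.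
Qed.

Section EdgeSet.
Variable S : {set 'I_m}.

Lemma reconnects_gap j r : j < r <= k -> path_edge j \notin S ->
  reconnects ends S (path_edge r) (path_edge j).
Proof.
move=> jr jS; rewrite /reconnects (conn_ends _ (joins_path_edge _)); last by lia.
apply/negP; rewrite conn_sym => c.
have jSr : path_edge j.+1.-1 \notin S :\ path_edge r by rewrite !inE (negbTE jS) andbF.
have rSr : path_edge r \notin S :\ path_edge r by rewrite !inE eqxx.
have := segment_closed (a := j.+1) (b := r) isT ltac:(lia) jSr rSr c.
by rewrite !mem_segment_v; lia.
Qed.

Lemma reconnects_off_path e f : e \in path_edges -> f \notin path_edges ->
  reconnects ends S e f = ~~ conn ends (S :\: path_edges) (ends f).1 (ends f).2.
Proof.
move=> eP fP; rewrite /reconnects; congr negb; apply/idP/idP; last first.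
  apply: conn_mono; apply/subsetP => g /setDP[gS gP].
  by rewrite !inE gS andbT; apply: contraNneq gP => ->.
case/path_edgesP: eP => r rk -> c.
have sub : (S :\ path_edge r) :\: path_edges \subset S :\: path_edges.
  by apply/subsetP => g; rewrite !inE => /and3P[-> _ ->].
apply: (conn_mono sub); apply: (conn_skip_path rk _ _ _ c).
- by rewrite !inE eqxx.
- by apply: touches_off_path fP _; rewrite /touches eqxx.
- by apply: touches_off_path fP _; rewrite /touches eqxx orbT.
Qed.

(* On a path contained in [S], internal activity does not depend on the path edge. *)
Lemma int_active_pathE e : e \in path_edges -> path_edges \subset S ->
  int_active ends S e = [forall f, (f \notin path_edges) &&
    ~~ conn ends (S :\: path_edges) (ends f).1 (ends f).2 ==> (i <= f)].
Proof.
move=> eP PS; apply: eq_forallb => f.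
case: (boolP (f \in path_edges)) => fP /=.
  case: (eqVneq f e) => [->|fe]; first by rewrite leqnn implybT.
  have fSe : f \in S :\ e by rewrite !inE fe (subsetP PS).
  by rewrite /reconnects (conn_edge fSe (joins_ends _ _)).
rewrite reconnects_off_path //; congr (_ ==> _).
by rewrite !inE in eP fP; apply/idP/idP; lia.
Qed.

Hypothesis connS : connectedF ends S.

Lemma int_active_before_gap j r : r < j <= k -> path_edge j \notin S ->
  path_edge r \in S -> int_active ends S (path_edge r).
Proof.
move=> rj jS rS; apply/forallP => f; apply/implyP => rec.
have jr := joins_path_edge (t := r) ltac:(lia).
have in_run x : conn ends (S :\ path_edge r) (v r.+1) x -> x \in segment r.+1 j.
  have rSr : path_edge r.+1.-1 \notin S :\ path_edge r by rewrite !inE eqxx.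
  have jSr : path_edge j \notin S :\ path_edge r by rewrite !inE (negbTE jS) andbF.
  move=> /(segment_closed (a := r.+1) (b := j) isT ltac:(lia) rSr jSr); apply.
  by rewrite mem_segment_v; lia.
(* [f] reconnects [S - e_(i+r)], so it cannot have both ends on the side of [v r] *)
have [x fx /segmentP[s ss xs]] : exists2 x, touches ends f x & x \in segment r.+1 j.
  move: rec; rewrite /reconnects.
  case/orP: (conn_setD1_split (ends f).1 connS rS jr) => c1;
  case/orP: (conn_setD1_split (ends f).2 connS rS jr) => c2.
  - by rewrite conn_sym in c1; case/negP; apply: connect_trans c1 c2.
  - by exists (ends f).2; rewrite ?in_run // /touches eqxx orbT.
  - by exists (ends f).1; rewrite ?in_run // /touches eqxx.
  - by exists (ends f).1; rewrite ?in_run // /touches eqxx.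
subst x; have [->|->] := touches_interior (s := s) ltac:(lia) fx;
  by rewrite !path_edgeE; lia.
Qed.

Lemma not_ext_active_gap j : 0 < j <= k -> path_edge j \notin S ->
  path_edge j.-1 \in S -> ~~ ext_active ends S (path_edge j).
Proof.
move=> jk jS fS; apply/forallPn; exists (path_edge j.-1).
rewrite negb_imply -ltnNge; apply/andP; split; last by rewrite !path_edgeE; lia.
rewrite /on_cycle !inE fS orbT /=.
have jf : joins ends (path_edge j.-1) (v j.-1) (v j).
  have := joins_path_edge (t := j.-1) ltac:(lia).
  by rewrite prednK //; lia.
have je : joins ends (path_edge j) (v j) (v j.+1) by apply: joins_path_edge; lia.
have ef : path_edge j != path_edge j.-1.
  by apply/eqP => /(congr1 (@nat_of_ord m)); rewrite !path_edgeE; lia.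
(* in [S - e_(i+j-1)] the vertex [v j] is isolated, so [v j.+1] hangs on [v j.-1] *)
have c : conn ends (S :\ path_edge j.-1) (v j.-1) (v j.+1).
  case/orP: (conn_setD1_split (v j.+1) connS fS jf) => // c; exfalso.
  have fSf : path_edge j.-1 \notin S :\ path_edge j.-1 by rewrite !inE eqxx.
  have jSf : path_edge j \notin S :\ path_edge j.-1 by rewrite !inE (negbTE jS) andbF.
  have := segment_closed (a := j) (b := j) ltac:(lia) ltac:(lia) fSf jSf c.
  by rewrite !mem_segment_v; lia.
have sub : S :\ path_edge j.-1 \subset (path_edge j |: S) :\ path_edge j.-1.
  by apply/subsetP => g; rewrite !inE => /andP[-> ->]; rewrite orbT.
rewrite (conn_ends _ jf); apply: connect_trans (conn_mono sub c) _.
by apply: (conn_edge (f := path_edge j)); rewrite 1?joins_sym // !inE ef eqxx.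
Qed.

Variable pos : 'I_m -> bool.
Hypothesis hpos : forall t, t <= k -> pos (path_edge t).

Lemma activity_path_edge t : t <= k -> activity ends pos S (path_edge t) =
  if path_edge t \in S then (if int_active ends S (path_edge t) then L else D)
  else (if ext_active ends S (path_edge t) then l else d).
Proof. by move=> tk; rewrite /activity hpos. Qed.

Lemma activity_path_subset : path_edges \subset S ->
  (forall t, t <= k -> activity ends pos S (path_edge t) = L) \/
  (forall t, t <= k -> activity ends pos S (path_edge t) = D).
Proof.
move=> PS; have intE t : t <= k ->
    int_active ends S (path_edge t) = int_active ends S (path_edge 0).
  by move=> tk; rewrite !int_active_pathE // mem_path_edges.
have inS t : t <= k -> path_edge t \in S by move=> tk; rewrite (subsetP PS) ?mem_path_edges.
case: (boolP (int_active ends S (path_edge 0))) => h0; [left|right] => t tk;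
  by rewrite activity_path_edge // inS // intE // ?(negbTE h0) ?h0.
Qed.

Lemma activity_gap j : 0 < j <= k -> (forall t, t <= k -> (path_edge t \in S) = (t != j)) ->
  forall t, t <= k ->
  activity ends pos S (path_edge t) = if t < j then L else if t == j then d else D.
Proof.
move=> jk inS t tk; have jS : path_edge j \notin S by rewrite inS ?eqxx //; lia.
rewrite activity_path_edge //; case: (ltngtP t j) => [tj|jt|->].
- have tS : path_edge t \in S by rewrite inS // ltn_eqF.
  by rewrite tS (int_active_before_gap _ jS tS) //; lia.
- have tS : path_edge t \in S by rewrite inS // gtn_eqF.
  have rec := reconnects_gap (j := j) (r := t) ltac:(lia) jS.
  by rewrite tS (negbTE (reconnects_not_int_active rec _)) // !path_edgeE; lia.
- have jS1 : path_edge j.-1 \in S by rewrite inS; lia.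
  by rewrite (negbTE jS) (negbTE (not_ext_active_gap jk jS jS1)).
Qed.

Lemma activity_gap0 : (forall t, t <= k -> (path_edge t \in S) = (t != 0)) ->
  forall t, 0 < t <= k -> activity ends pos S (path_edge t) = D.
Proof.
move=> inS t tk; have iS : path_edge 0 \notin S by rewrite inS.
have tS : path_edge t \in S by rewrite inS; lia.
have rec := reconnects_gap (j := 0) (r := t) ltac:(lia) iS.
rewrite activity_path_edge; last by lia.
by rewrite tS (negbTE (reconnects_not_int_active rec _)) // !path_edgeE; lia.
Qed.

End EdgeSet.
End Path.

Theorem lemma3p1 (V : finType) (m : nat) (ends : 'I_m -> V * V)
    (pos : 'I_m -> bool) (i k : nat) (v : nat -> V)
    (hk : (0 < k)%N) (hik : (i + k < m)%N)
    (hpos : forall e : 'I_m, (i <= e <= i + k)%N -> pos e)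
    (hvinj : forall r s, (r <= k.+1)%N -> (s <= k.+1)%N -> v r = v s -> r = s)
    (hpath : forall e : 'I_m, (i <= e <= i + k)%N ->
        joins ends e (v (e - i)%N) (v (e - i).+1))
    (hdeg : forall r, (1 <= r <= k)%N -> degree ends (v r) = 2)
    (S : {set 'I_m}) (hS : spanning_tree ends S) :
  let a := activity ends pos S in
  let inP (e : 'I_m) := (i <= e <= i + k)%N in
  ((forall e : 'I_m, inP e -> e \in S) ->
     (forall e : 'I_m, inP e -> a e = L) \/ (forall e : 'I_m, inP e -> a e = D))
  /\
  (forall j, (0 < j <= k)%N ->
     (forall e : 'I_m, inP e -> (e \notin S <-> nat_of_ord e = (i + j)%N)) ->
     forall e : 'I_m, inP e ->
       a e = (if (e < i + j)%N then L else if nat_of_ord e == (i + j)%N then d else D))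
  /\
  ((forall e : 'I_m, inP e -> (e \notin S <-> nat_of_ord e = i)) ->
     forall e : 'I_m, inP e ->
       (nat_of_ord e = i -> a e = l \/ a e = d) /\ (nat_of_ord e <> i -> a e = D)).
Proof.
move=> a inP; rewrite {}/a {}/inP.
have [connS _] := hS.
have bnd t : t <= k -> i <= path_edge hik t <= i + k by move=> tk; rewrite path_edgeE //; lia.
have hpos' t : t <= k -> pos (path_edge hik t) by move=> /bnd; apply: hpos.
have onP (e : 'I_m) : i <= e <= i + k -> exists2 t, t <= k & e = path_edge hik t.
  by move=> eP; apply/(path_edgesP hik); rewrite inE.
have omitted j : (forall e : 'I_m, i <= e <= i + k -> (e \notin S <-> nat_of_ord e = i + j)) ->
    forall t, t <= k -> (path_edge hik t \in S) = (t != j).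
  move=> H t tk; have [tS jS] := H _ (bnd t tk); rewrite path_edgeE // in tS jS.
  apply/idP/idP => [inS|tj]; first by apply: contraTneq inS => tj; apply: jS; rewrite tj.
  by apply/negPn/negP => /tS; lia.
split; [|split].
- move=> allS; have PS : path_edges m i k \subset S.
    by apply/subsetP => g; rewrite inE; apply: allS.
  case: (activity_path_subset hvinj hpath hdeg hpos' PS) => h; [left|right];
    by move=> e /onP[t tk ->]; apply: h.
- move=> j jk H e /onP[t tk ->].
  rewrite (activity_gap hvinj hpath hdeg connS hpos' jk (omitted j H)) //.
  by rewrite path_edgeE // ltn_add2l eqn_add2l.
- move=> H; have inS0 : forall t, t <= k -> (path_edge hik t \in S) = (t != 0).
    by apply: omitted => e; rewrite addn0; apply: H.
  move=> e /onP[t tk ->]; rewrite path_edgeE //.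
  have [->|t0] := posnP t.
    rewrite addn0 /activity hpos' // inS0 //=.
    by split=> [_|/(_ erefl)//]; case: ifP; auto.
  split=> [ti|_]; first by exfalso; lia.
  by apply: (activity_gap0 hvinj hpath hdeg hpos' inS0); lia.
Qed.
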